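(* Let $m,n\in\mathbb N$. The truncation map $\mathfrak{Tr}_{n+1,n}:\widehat{\mathcal E}^{m|n+1}_+\to\widehat{\mathcal E}^{m|n}_+$ commutes with the bar involutions.
   Context: $\mathcal U=U_q(\mathfrak{sl}(\infty))$ over $\mathbb Q(q)$ generated by $E_a,F_a,K_{a,a+1}^{\pm1}$ ($a\in\mathbb Z$), comultiplication $\Delta(E_a)=1\otimes E_a+E_a\otimes K_{a,a+1}^{-1}$, $\Delta(F_a)=F_a\otimes1+K_{a,a+1}\otimes F_a$; bar map $\bar q=q^{-1}$, fixing $E_a,F_a$, inverting $K_{a,a+1}$. $\Lambda^m\mathbb V$: basis $v_{a_1}\wedge\cdots\wedge v_{a_m}$ ($a_1>\cdots>a_m$); for index set $S$, $F_a$ replaces $a$ by $a+1$ if $a\in S,a+1\notin S$ (else $0$), $E_a$ replaces $a+1$ by $a$ if $a+1\in S,a\notin S$ (else $0$), $K_{a,a+1}$ acts by $q^{[a\in S]-[a+1\in S]}$. $\Lambda^n\mathbb W$: basis $w_{b_1}\wedge\cdots\wedge w_{b_n}$ ($b_1<\cdots<b_n$); $F_a$ replaces $a+1$ by $a$ if $a+1\in S,a\notin S$ (else $0$), $E_a$ replaces $a$ by $a+1$ if $a\in S,a+1\notin S$ (else $0$), $K_{a,a+1}$ acts by $q^{[a+1\in S]-[a\in S]}$. $I(m|n)=\{-m,\dots,-1\}\cup\{1,\dots,n\}$; $\mathbb Z^{m|n}_+=\{f:f(-m)>\cdots>f(-1),\ f(1)<\cdots<f(n)\}$, $\mathbb Z^{m|n}_{++}=\{f\in\mathbb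 Z^{m|n}_+:f(n)\le n\}$. $\mathcal E^{m|n}=\Lambda^m\mathbb V\otimes\Lambda^n\mathbb W$ with basis $K_f=v_{f(-m)}\wedge\cdots\wedge v_{f(-1)}\otimes w_{f(1)}\wedge\cdots\wedge w_{f(n)}$. $\widehat{\mathcal E}^{m|n}$: formal sums $\sum c_fK_f$ such that for every $d\in\mathbb N$ only finitely many $f$ with $c_f\ne0$ have $f(i)\ge-d$ for all $1\le i\le n$; $\widehat{\mathcal E}^{m|n}_+$: those supported on $\mathbb Z^{m|n}_{++}$. Super Bruhat ordering: with $d_i(j)=-\mathrm{sgn}(i)\delta_{ij}$, $f\downarrow g$ if $g=f-d_i+d_j$ ($i<0<j$, $f(i)=f(j)$), or $g=f\cdot\tau_{ij}$ ($i<j<0$, $f(i)>f(j)$), or $g=f\cdot\tau_{ij}$ ($0<i<j$, $f(i)<f(j)$); $\succ$ is the transitive closure. $f$ is typical if $\{f(i):i<0\}\cap\{f(j):j>0\}=\emptyset$. The bar involution on $\widehat{\mathcal E}^{m|n}$ is the unique continuous anti-linear map fixing $K_f$ for typical $f$, with $\overline{Xu}=\bar X\bar u$ for $X\in\mathcal U$, which is an involution and satisfies $\overline{K_f}\in K_f+$ (possibly infinite) $\mathbb Z[q,q^{-1}]$-combination of $K_g$ with $g\prec f$. $\mathfrak{Tr}_{n+1,n}$ is the (continuous) linear map sending $K_f$ ($f\in\mathbb Z^{m|n+1}_{++}$) to $K_{f^{(n)}}$ if $f(n+1)=n+1$ and to $0$ otherwise, $f^{(n)}$ being the restriction of $f$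 to $I(m|n)$. *)

From HB Require Import structures.
From Stdlib Require Import Relations.
From mathcomp Require Import all_boot all_order all_algebra.
From mathcomp Require Import fraction.
Set Implicit Arguments.
Unset Strict Implicit.
Unset Printing Implicit Defensive.
Import Order.TTheory GRing.Theory Num.Theory.
Local Open Scope ring_scope.

Definition Fq : fieldType := {fraction {poly rat}}.
Definition qq : Fq := tofrac ('X : {poly rat}).

Definition laurent_int (c : Fq) : Prop :=
  exists (p : {poly int}) (k : nat),
    c = (map_poly (fun z : int => (z%:~R : Fq)) p).[qq] / qq ^+ k.

(** A function f : I(m|n) -> Z is encoded as a pair (fv, fw) with
    fv p = f(p - m) for p : 'I_m   (so fv 0 = f(-m), fv (m-1) = f(-1)),
    fw r = f(r + 1) for r : 'I_n   (so fw 0 = f(1), fw (n-1) = f(n)). *)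
Definition Zmn (m n : nat) := ({ffun 'I_m -> int} * {ffun 'I_n -> int})%type.

(** Formal sums sum_f c_f K_f are coefficient functions. *)
Definition fsum (m n : nat) := Zmn m n -> Fq.

Definition inZplus m n (f : Zmn m n) : bool :=
  [forall p : 'I_m, forall r : 'I_m, (p < r)%N ==> (f.1 r < f.1 p)] &&
  [forall p : 'I_n, forall r : 'I_n, (p < r)%N ==> (f.2 p < f.2 r)].

(** f in Z^{m|n}_{++} : additionally f(n) <= n (stated as all f(j) <= n). *)
Definition inZpp m n (f : Zmn m n) : bool :=
  inZplus f && [forall r : 'I_n, f.2 r <= n%:Z].

Definition typical m n (f : Zmn m n) : bool :=
  [forall p : 'I_m, forall r : 'I_n, f.1 p != f.2 r].

Definition in_hatE m n (u : fsum m n) : Prop :=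
  (forall f, u f != 0 -> inZplus f) /\
  (forall d : nat, exists s : seq (Zmn m n),
     forall f, u f != 0 -> (forall r : 'I_n, - (d%:Z) <= f.2 r) -> f \in s).

Definition in_hatEp m n (u : fsum m n) : Prop :=
  in_hatE u /\ (forall f, u f != 0 -> inZpp f).

Definition Kb m n (f : Zmn m n) : fsum m n := fun g => (g == f)%:R.

Definition memb k (x : int) (s : {ffun 'I_k -> int}) : bool := [exists p, s p == x].
Definition repl k (x y : int) (s : {ffun 'I_k -> int}) : {ffun 'I_k -> int} :=
  [ffun p => if s p == x then y else s p].
(** replace a by a+1 if a in S, a+1 notin S (else 0 = None) *)
Definition upop k (a : int) (s : {ffun 'I_k -> int}) : option {ffun 'I_k -> int} :=
  if memb a s && ~~ memb (a + 1) s then Some (repl a (a + 1) s) else None.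
Definition downop k (a : int) (s : {ffun 'I_k -> int}) : option {ffun 'I_k -> int} :=
  if memb (a + 1) s && ~~ memb a s then Some (repl (a + 1) a s) else None.
(** exponent of q in the action of K_{a,a+1} on Lambda^m V resp. Lambda^n W *)
Definition KV k (a : int) (s : {ffun 'I_k -> int}) : int :=
  (memb a s : nat)%:Z - (memb (a + 1) s : nat)%:Z.
Definition KW k (a : int) (s : {ffun 'I_k -> int}) : int :=
  (memb (a + 1) s : nat)%:Z - (memb a s : nat)%:Z.

(** The (continuous) action of the generators on formal sums, via the
    comultiplication: F_a = F_a (x) 1 + K (x) F_a, E_a = 1 (x) E_a + E_a (x) K^-1,
    K = K (x) K.  On Lambda^m V, F_a = upop, E_a = downop; on Lambda^n W,
    F_a = downop, E_a = upop.  The coefficient of K_g is computed from the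
    unique possible preimage of g (the test checks that it is a preimage). *)
Definition actF m n (a : int) (u : fsum m n) : fsum m n := fun g =>
  (if upop a (repl (a + 1) a g.1) == Some g.1
   then u (repl (a + 1) a g.1, g.2) else 0)
  + (if downop a (repl a (a + 1) g.2) == Some g.2
     then qq ^ (KV a g.1) * u (g.1, repl a (a + 1) g.2) else 0).

Definition actE m n (a : int) (u : fsum m n) : fsum m n := fun g =>
  (if upop a (repl (a + 1) a g.2) == Some g.2
   then u (g.1, repl (a + 1) a g.2) else 0)
  + (if downop a (repl a (a + 1) g.1) == Some g.1
     then qq ^ (- KW a g.2) * u (repl a (a + 1) g.1, g.2) else 0).

Definition actK m n (a : int) (u : fsum m n) : fsum m n := fun g =>
  qq ^ (KV a g.1 + KW a g.2) * u g.

Definition actKinv m n (a : int) (u : fsum m n) : fsum m n := fun g =>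
  qq ^ (- (KV a g.1 + KW a g.2)) * u g.

Definition lowerAt k (p : 'I_k) (s : {ffun 'I_k -> int}) : {ffun 'I_k -> int} :=
  [ffun x => if x == p then s x - 1 else s x].
Definition swapAt k (p r : 'I_k) (s : {ffun 'I_k -> int}) : {ffun 'I_k -> int} :=
  [ffun x => if x == p then s r else if x == r then s p else s x].

Definition bdown m n (f g : Zmn m n) : Prop :=
  (exists (p : 'I_m) (r : 'I_n),
      f.1 p = f.2 r /\ g = (lowerAt p f.1, lowerAt r f.2))
  \/ (exists p r : 'I_m, [/\ (p < r)%N, f.1 r < f.1 p & g = (swapAt p r f.1, f.2)])
  \/ (exists p r : 'I_n, [/\ (p < r)%N, f.2 p < f.2 r & g = (f.1, swapAt p r f.2)]).

Definition bprec m n (g f : Zmn m n) : Prop := clos_trans (Zmn m n) (@bdown m n) f g.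

Definition is_bar m n (sig : Fq -> Fq) (psi : fsum m n -> fsum m n) : Prop :=
  (forall u, in_hatE u -> in_hatE (psi u)) /\
  (* continuous and anti-linear: psi(sum c_f K_f) = sum sig(c_f) psi(K_f) *)
  (forall u, in_hatE u -> forall g, exists s : seq (Zmn m n),
     [/\ uniq s,
         forall f, sig (u f) * psi (Kb f) g != 0 -> f \in s &
         psi u g = \sum_(f <- s) sig (u f) * psi (Kb f) g]) /\
  (forall f, inZplus f -> typical f -> psi (Kb f) = Kb f) /\
  (forall u, in_hatE u -> forall a : int,
     [/\ psi (actE a u) = actE a (psi u),
         psi (actF a u) = actF a (psi u) &
         psi (actK a u) = actKinv a (psi u)]) /\
  (forall u, in_hatE u -> psi (psi u) = u) /\
  (forall f, inZplus f -> exists c : fsum m n,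
     [/\ forall g, laurent_int (c g),
         forall g, c g != 0 -> bprec g f &
         psi (Kb f) = (fun g => Kb f g + c g)]).

Definition ext n (hw : {ffun 'I_n -> int}) (x : int) : {ffun 'I_n.+1 -> int} :=
  [ffun k => if unlift ord_max k is Some k' then hw k' else x].

Definition trunc m n (u : fsum m n.+1) : fsum m n := fun h =>
  u (h.1, ext h.2 (n.+1)%:Z).

From HB Require Import structures.
From Stdlib Require Import FunctionalExtensionality.
From mathcomp Require Import all_boot all_order all_algebra perm zify ring.
Set Implicit Arguments.
Unset Strict Implicit.
Unset Printing Implicit Defensive.
Import Order.TTheory GRing.Theory Num.Theory.
Local Open Scope ring_scope.

(* Both sides are continuous and anti-linear in u, so it suffices to treat a
   basis vector K_f, f in Z^{m|n+1}_{++}, i.e. to show that the defect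
   Tr(bar K_f) - bar(Tr K_f) vanishes.  On vectors supported on Z_{++},
   truncation commutes with every F_a, and with E_a when a, a+1 <> n+1, so the
   defect obeys the straightening relations that express K_f through F_a K_g
   or E_a K_g.  A typical f has no defect, as both bar maps fix K_f.  Otherwise
   let b be the smallest atypical value of f.  If b-1 is free,
   K_f = F_{b-1} K_g - q^c K_g' with g of smaller atypicality and g' of smaller
   weight (sum of all entries); if not, the first free value below b is moved
   up by one F_a or E_a.  By triangularity the defect at h vanishes unless
   weight f - weight h >= n+1, so an induction on the atypicality, on this gap
   and on the distance to the first free value kills every defect. *)

Local Notation lower a s := (repl (a + 1) a s).

Section IndexSets.
Variable k : nat.
Implicit Types (s t : {ffun 'I_k -> int}) (a x y z : int).

Lemma membP x s : reflect (exists p, s p = x) (memb x s).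
Proof. by apply: (iffP existsP) => -[p /eqP]; exists p. Qed.

Lemma memb_neq x s p : ~~ memb x s -> s p != x.
Proof. by apply: contra => /eqP sp; apply/membP; exists p. Qed.

Lemma memb_repl x z y s :
  memb y (repl x z s) = (memb x s && (y == z)) || (memb y s && (y != x)).
Proof.
apply/membP/idP.
- case=> p; rewrite ffunE; case: eqP => [<- <-|ne <-].
    by rewrite eqxx andbT; apply/orP; left; apply/membP; exists p.
  by apply/orP; right; apply/andP; split; [apply/membP; exists p|apply/eqP].
- case/orP=> /andP[/membP[p sp] yzx].
    by exists p; rewrite ffunE sp eqxx (eqP yzx).
  by exists p; rewrite ffunE sp; case: eqP yzx => // ->; rewrite eqxx.
Qed.

Lemma memb_repl_other x z y s : y != z -> y != x -> memb y (repl x z s) = memb y s.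
Proof. by move=> yz yx; rewrite memb_repl (negbTE yz) yx andbF andbT. Qed.

Lemma memb_lower_succ a s : memb (a + 1) (lower a s) = false.
Proof.
have aa1 : (a + 1 == a) = false by apply/eqP; lia.
by rewrite memb_repl aa1 eqxx !andbF.
Qed.

Lemma memb_lower a s : memb (a + 1) s -> memb a (lower a s).
Proof. by move=> sa1; rewrite memb_repl sa1 eqxx. Qed.

Lemma replK x z s : ~~ memb z s -> repl z x (repl x z s) = s.
Proof.
move=> zs; apply/ffunP=> p; rewrite !ffunE.
case: (s p =P x) => [->|_]; first by rewrite eqxx.
by rewrite (negbTE (memb_neq p zs)).
Qed.

Lemma upopP a s t :
  upop a s = Some t -> [/\ memb a s, ~~ memb (a + 1) s & t = repl a (a + 1) s].
Proof. by rewrite /upop; case: ifP => // /andP[? ?] [<-]. Qed.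

Lemma downopP a s t :
  downop a s = Some t -> [/\ memb (a + 1) s, ~~ memb a s & t = lower a s].
Proof. by rewrite /downop; case: ifP => // /andP[? ?] [<-]. Qed.

Lemma upopE a s : memb a s -> ~~ memb (a + 1) s -> upop a s = Some (repl a (a + 1) s).
Proof. by rewrite /upop => -> ->. Qed.

Lemma downopE a s : memb (a + 1) s -> ~~ memb a s -> downop a s = Some (lower a s).
Proof. by rewrite /downop => -> ->. Qed.

Lemma downop_None a s : ~~ memb (a + 1) s -> downop a s = None.
Proof. by rewrite /downop => /negbTE ->. Qed.

(* The preimage tests in [actF] and [actE], recast as conditions on the image. *)
Lemma upop_lower_eq a s t :
  (upop a (lower a t) == Some t) && (lower a t == s)
  = (upop a s == Some t) && (t == repl a (a + 1) s).
Proof.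
apply/idP/idP => /andP[/eqP up /eqP ts].
  by rewrite -ts up; case/upopP: up => _ _ <-; rewrite !eqxx.
by case/upopP: (up) => _ sa1 _; rewrite ts replK // -ts up !eqxx.
Qed.

Lemma downop_raise_eq a s t :
  (downop a (repl a (a + 1) t) == Some t) && (repl a (a + 1) t == s)
  = (downop a s == Some t) && (t == lower a s).
Proof.
apply/idP/idP => /andP[/eqP dn /eqP ts].
  by rewrite -ts dn; case/downopP: dn => _ _ <-; rewrite !eqxx.
by case/downopP: (dn) => _ sa _; rewrite ts replK // -ts dn !eqxx.
Qed.

Lemma sum_repl x y s : injective s -> memb x s -> \sum_p repl x y s p = \sum_p s p + (y - x).
Proof.
move=> s_inj /membP[p0 sp0].
rewrite (eq_bigr (fun p => s p + (if p == p0 then y - x else 0))); last first.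
  move=> p _; rewrite ffunE; case: (p =P p0) => [->|ne]; first by rewrite sp0 eqxx; ring.
  by case: eqP => [spx|]; [case: ne; apply: s_inj; rewrite spx sp0 | rewrite addr0].
by rewrite big_split /= -big_mkcond /= big_pred1_eq.
Qed.

Lemma sum_lowerAt p s : \sum_x lowerAt p s x = \sum_x s x - 1.
Proof.
rewrite (bigD1 p) //= [in RHS](bigD1 p) //= ffunE eqxx.
rewrite (eq_bigr s); first by ring.
by move=> x /negbTE xp; rewrite ffunE xp.
Qed.

Lemma sum_swapAt p r s : \sum_x swapAt p r s x = \sum_x s x.
Proof.
rewrite [RHS](reindex_inj (@perm_inj _ (tperm p r))); apply: eq_bigr => x _.
by rewrite ffunE permE /=; case: ifP => // _; case: ifP.
Qed.

End IndexSets.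

Section LastEntry.
Variable n : nat.
Implicit Types (s : {ffun 'I_n -> int}) (t : {ffun 'I_n.+1 -> int}) (x y z : int).

Definition drop_last t : {ffun 'I_n -> int} := [ffun r => t (lift ord_max r)].

Lemma ext_lift s z r : ext s z (lift ord_max r) = s r.
Proof. by rewrite ffunE liftK. Qed.

Lemma ext_max s z : ext s z ord_max = z.
Proof. by rewrite ffunE unlift_none. Qed.

Lemma drop_last_ext s z : drop_last (ext s z) = s.
Proof. by apply/ffunP=> r; rewrite ffunE ext_lift. Qed.

Lemma ext_drop_last t : ext (drop_last t) (t ord_max) = t.
Proof.
apply/ffunP=> r; case: (unliftP ord_max r) => [j ->|->].
  by rewrite ext_lift ffunE.
by rewrite ext_max.
Qed.

Lemma ext_inj s s' z z' : ext s z = ext s' z' -> s = s' /\ z = z'.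
Proof.
move=> e; split; first by rewrite -(drop_last_ext s z) e drop_last_ext.
by rewrite -(ext_max s z) e ext_max.
Qed.

Lemma eq_ext s s' z z' : (ext s z == ext s' z') = (s == s') && (z == z').
Proof. by apply/eqP/andP => [/ext_inj[-> ->]|[/eqP-> /eqP->]]. Qed.

Lemma memb_ext x s z : memb x (ext s z) = memb x s || (x == z).
Proof.
apply/membP/orP => [[r]|[/membP[r <-]|/eqP->]].
- case: (unliftP ord_max r) => [j ->|->]; rewrite ?ext_lift ?ext_max => <-.
    by left; apply/membP; exists j.
  by right.
- by exists (lift ord_max r); apply: ext_lift.
- by exists ord_max; apply: ext_max.
Qed.

Lemma repl_ext x y s z : repl x y (ext s z) = ext (repl x y s) (if z == x then y else z).
Proof.
apply/ffunP=> r; case: (unliftP ord_max r) => [j ->|->].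
  by rewrite ffunE !ext_lift ffunE.
by rewrite ffunE !ext_max.
Qed.

Lemma sum_ext s z : \sum_(r < n.+1) ext s z r = \sum_(r < n) s r + z.
Proof.
rewrite big_ord_recr /= ext_max; congr (_ + _); apply: eq_bigr => r _.
have -> : widen_ord (leqnSn n) r = lift ord_max r by apply/val_inj; exact/esym/lift_max.
exact: ext_lift.
Qed.

End LastEntry.

Definition weight m n (f : Zmn m n) : int := \sum_p f.1 p + \sum_r f.2 r.

Lemma weight_ext m n (h1 : {ffun 'I_m -> int}) (h2 : {ffun 'I_n -> int}) z :
  weight (h1, ext h2 z) = weight (h1, h2) + z.
Proof. by rewrite /weight /= sum_ext addrA. Qed.

Lemma weight_bdown m n (f g : Zmn m n) : bdown f g -> weight g <= weight f.
Proof.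
case=> [[p [r [_ ->]]]|[[p [r [_ _ ->]]]|[p [r [_ _ ->]]]]];
  rewrite /weight /= ?sum_lowerAt ?sum_swapAt //.
by apply: lerD; rewrite lerBlDr lerDl.
Qed.

Lemma weight_bprec m n (f g : Zmn m n) : bprec g f -> weight g <= weight f.
Proof. by elim=> [x y /weight_bdown //|x y z _ yx _ zy]; apply: le_trans zy yx. Qed.

Lemma bdown_boundW m n (f g : Zmn m n) B :
  bdown f g -> (forall r, f.2 r <= B) -> forall r, g.2 r <= B.
Proof.
case=> [[p [r [_ ->]]]|[[p [r [_ _ ->]]]|[p [r [_ _ ->]]]]] fB x /=; rewrite ?ffunE //.
- by case: eqP => _ //; have := fB x; lia.
- by case: eqP => _; [|case: eqP].
Qed.

Lemma bprec_boundW m n (f g : Zmn m n) B :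
  bprec g f -> (forall r, f.2 r <= B) -> forall r, g.2 r <= B.
Proof. elim=> [x y|x y z _ yB _ zB /yB /zB //]; exact: bdown_boundW. Qed.

Section Dominant.
Variables m n : nat.
Implicit Types (f : Zmn m n) (a b x y : int).

Lemma inZplus_injV f : inZplus f -> injective f.1.
Proof.
case/andP=> /forallP dec _ p r e; have [lt|lt|//] := ltngtP p r; last exact: val_inj.
  by move/forallP: (dec p) => /(_ r); rewrite lt /= e ltxx.
by move/forallP: (dec r) => /(_ p); rewrite lt /= e ltxx.
Qed.

Lemma inZplus_injW f : inZplus f -> injective f.2.
Proof.
case/andP=> _ /forallP inc p r e; have [lt|lt|//] := ltngtP p r; last exact: val_inj.
  by move/forallP: (inc p) => /(_ r); rewrite lt /= e ltxx.
by move/forallP: (inc r) => /(_ p); rewrite lt /= e ltxx.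
Qed.

Lemma weight_replV (f1 : {ffun 'I_m -> int}) (f2 : {ffun 'I_n -> int}) x y :
  inZplus (f1, f2) -> memb x f1 -> weight (repl x y f1, f2) = weight (f1, f2) + (y - x).
Proof. by move=> /inZplus_injV inj1 x1; rewrite /weight /= (sum_repl _ inj1 x1); ring. Qed.

Lemma weight_replW (f1 : {ffun 'I_m -> int}) (f2 : {ffun 'I_n -> int}) x y :
  inZplus (f1, f2) -> memb x f2 -> weight (f1, repl x y f2) = weight (f1, f2) + (y - x).
Proof. by move=> /inZplus_injW inj2 x2; rewrite /weight /= (sum_repl _ inj2 x2); ring. Qed.

Lemma lower_mono a x y : x < y -> x != a -> y != a ->
  (if x == a + 1 then a else x) < (if y == a + 1 then a else y).
Proof. by move=> xy /eqP xa /eqP ya; do 2 case: eqP => ?; lia. Qed.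

Lemma inZplus_lowerV (f1 : {ffun 'I_m -> int}) (f2 : {ffun 'I_n -> int}) a :
  inZplus (f1, f2) -> ~~ memb a f1 -> inZplus (lower a f1, f2).
Proof.
case/andP=> /forallP dec inc a1; apply/andP; split=> //.
apply/forallP=> p; apply/forallP=> r; apply/implyP=> pr.
move/forallP: (dec p) => /(_ r); rewrite pr /= !ffunE => lt.
by apply: lower_mono; rewrite ?memb_neq.
Qed.

Lemma inZplus_lowerW (f1 : {ffun 'I_m -> int}) (f2 : {ffun 'I_n -> int}) a :
  inZplus (f1, f2) -> ~~ memb a f2 -> inZplus (f1, lower a f2).
Proof.
case/andP=> dec /forallP inc a2; apply/andP; split=> //.
apply/forallP=> p; apply/forallP=> r; apply/implyP=> pr.
move/forallP: (inc p) => /(_ r); rewrite pr /= !ffunE => lt.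
by apply: lower_mono; rewrite ?memb_neq.
Qed.

Lemma inZpp_lowerV (f1 : {ffun 'I_m -> int}) (f2 : {ffun 'I_n -> int}) a :
  inZpp (f1, f2) -> ~~ memb a f1 -> inZpp (lower a f1, f2).
Proof. by case/andP=> dom bd a1; rewrite /inZpp inZplus_lowerV. Qed.

Lemma inZpp_lowerW (f1 : {ffun 'I_m -> int}) (f2 : {ffun 'I_n -> int}) a :
  inZpp (f1, f2) -> ~~ memb a f2 -> inZpp (f1, lower a f2).
Proof.
case/andP=> dom /forallP bd a2; rewrite /inZpp inZplus_lowerW //=.
by apply/forallP=> r; rewrite ffunE; have := bd r; case: eqP => //= ->; lia.
Qed.

Lemma inZpp_plus f : inZpp f -> inZplus f.
Proof. by case/andP. Qed.

Lemma inZpp_memb_le f b : inZpp f -> memb b f.2 -> b <= n%:Z.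
Proof. by case/andP=> _ /forallP bd /membP[r <-]. Qed.

End Dominant.

Lemma inZplus_ext m n (h1 : {ffun 'I_m -> int}) (h2 : {ffun 'I_n -> int}) z :
  inZplus (h1, ext h2 z) -> inZplus (h1, h2).
Proof.
case/andP=> dec /forallP inc; apply/andP; split=> //.
apply/forallP=> p; apply/forallP=> r; apply/implyP=> pr.
move/forallP: (inc (lift ord_max p)) => /(_ (lift ord_max r)).
by rewrite !lift_max pr /= !ext_lift.
Qed.

Lemma ext_notinZplus m n (h1 : {ffun 'I_m -> int}) (t : {ffun 'I_n -> int}) z y :
  memb y t -> z <= y -> ~~ inZplus (h1, ext t z).
Proof.
case/membP=> r <- zy; apply/negP; case/andP=> _ /forallP /(_ (lift ord_max r)).
by move/forallP/(_ ord_max); rewrite lift_max ltn_ord ext_lift ext_max; lia.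
Qed.

Lemma big_uniq_supp (T : eqType) (F : T -> Fq) (s s' : seq T) :
  uniq s -> uniq s' -> (forall i, F i != 0 -> i \in s) -> (forall i, F i != 0 -> i \in s') ->
  \sum_(i <- s) F i = \sum_(i <- s') F i.
Proof.
move=> us us' sF s'F.
have nz (r : seq T) : \sum_(i <- r) F i = \sum_(i <- r | F i != 0) F i.
  by rewrite [RHS]big_mkcond; apply: eq_bigr => i _; case: eqP => // ->.
rewrite nz [RHS]nz -big_filter -[RHS]big_filter.
apply/perm_big/uniq_perm; rewrite ?filter_uniq // => i.
by rewrite !mem_filter; case: (boolP (F i != 0)) => // /[dup] /sF -> /s'F ->.
Qed.

Lemma if_natr (b c : bool) : (if b then (c%:R : Fq) else 0) = (b && c)%:R.
Proof. by case: b. Qed.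

Section FormalSums.
Variables m n : nat.
Implicit Types (f g x : Zmn m n) (u v : fsum m n).

Lemma Kb_neq f x : x != f -> Kb f x = 0.
Proof. by rewrite /Kb => /negbTE ->. Qed.

Lemma Kb_supp f x : Kb f x != 0 -> x = f.
Proof. by rewrite /Kb; case: (x =P f) => // _; rewrite /= eqxx. Qed.

Lemma eq0_outside u (P : pred (Zmn m n)) :
  (forall f, u f != 0 -> P f) -> forall f, ~~ P f -> u f = 0.
Proof. by move=> uP f; apply: contraNeq => /uP. Qed.

Lemma in_hatE_Kb f : inZplus f -> in_hatE (Kb f).
Proof.
by move=> Zf; split=> [g /Kb_supp -> //|d]; exists [:: f] => g /Kb_supp ->; rewrite inE.
Qed.

Lemma in_hatE0 : in_hatE (fun _ : Zmn m n => 0 : Fq).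
Proof. by split=> [g|d]; [rewrite eqxx | exists [::] => g; rewrite eqxx]. Qed.

Lemma in_hatE_addZ u v c : in_hatE u -> in_hatE v -> in_hatE (fun x => u x + c * v x).
Proof.
have supp g : u g + c * v g != 0 -> (u g != 0) || (v g != 0).
  move=> nz; apply/orP; case: (u g =P 0) => [u0|_]; [right | by left].
  by apply: contra nz => /eqP v0; rewrite u0 v0 mulr0 addr0 eqxx.
move=> [su fu] [sv fv]; split=> [g /supp/orP[/su|/sv] //|d].
have [s1 s1P] := fu d; have [s2 s2P] := fv d; exists (s1 ++ s2) => g /supp/orP gP gd.
by rewrite mem_cat; case: gP => [/s1P|/s2P] -> //; rewrite orbT.
Qed.

Lemma actF_Kb a f x :
  actF a (Kb f) x = ((upop a f.1 == Some x.1) && (x.2 == f.2))%:R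
    + ((downop a f.2 == Some x.2) && (x.1 == f.1))%:R * qq ^ (KV a x.1).
Proof.
case: x f => [x1 x2] [f1 f2]; rewrite /actF /Kb /=; congr (_ + _).
  rewrite if_natr xpair_eqE andbA upop_lower_eq; congr ((nat_of_bool _)%:R).
  apply/idP/idP => [/andP[/andP[up _] x2f2]|/andP[/eqP up x2f2]]; first by rewrite up x2f2.
  by case/upopP: (up) => _ _ <-; rewrite up x2f2 !eqxx.
rewrite (_ : (if _ then _ else _) = ((downop a (repl a (a + 1) x2) == Some x2) &&
    ((x1, repl a (a + 1) x2) == (f1, f2)))%:R * qq ^ KV a x1); last first.
  by case: ifP; rewrite ?mul0r // mulrC.
congr ((nat_of_bool _)%:R * _); rewrite xpair_eqE andbCA downop_raise_eq.
apply/idP/idP => [/andP[x1f1 /andP[dn _]]|/andP[/eqP dn x1f1]]; first by rewrite x1f1 dn.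
by case/downopP: (dn) => _ _ <-; rewrite dn x1f1 !eqxx.
Qed.

Lemma actE_Kb a f x :
  actE a (Kb f) x = ((upop a f.2 == Some x.2) && (x.1 == f.1))%:R
    + ((downop a f.1 == Some x.1) && (x.2 == f.2))%:R * qq ^ (- KW a x.2).
Proof.
case: x f => [x1 x2] [f1 f2]; rewrite /actE /Kb /=; congr (_ + _).
  rewrite if_natr xpair_eqE andbCA upop_lower_eq; congr ((nat_of_bool _)%:R).
  apply/idP/idP => [/andP[x1f1 /andP[up _]]|/andP[/eqP up x1f1]]; first by rewrite x1f1 up.
  by case/upopP: (up) => _ _ <-; rewrite up x1f1 !eqxx.
rewrite (_ : (if _ then _ else _) = ((downop a (repl a (a + 1) x1) == Some x1) &&
    ((repl a (a + 1) x1, x2) == (f1, f2)))%:R * qq ^ (- KW a x2)); last first.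
  by case: ifP; rewrite ?mul0r // mulrC.
congr ((nat_of_bool _)%:R * _); rewrite xpair_eqE andbA downop_raise_eq.
apply/idP/idP => [/andP[/andP[dn _] x2f2]|/andP[/eqP dn x2f2]]; first by rewrite dn x2f2.
by case/downopP: (dn) => _ _ <-; rewrite dn x2f2 !eqxx.
Qed.

Lemma actF_sub a u v x : actF a (fun y => u y - v y) x = actF a u x - actF a v x.
Proof.
rewrite /actF; do 2 case: ifP => _; rewrite ?addr0 ?add0r ?subr0 ?oppr0 ?mulrBr //.
by rewrite (opprD (v _)) addrACA.
Qed.

Lemma actE_sub a u v x : actE a (fun y => u y - v y) x = actE a u x - actE a v x.
Proof.
rewrite /actE; do 2 case: ifP => _; rewrite ?addr0 ?add0r ?subr0 ?oppr0 ?mulrBr //.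
by rewrite (opprD (v _)) addrACA.
Qed.

(* Preimages of h under F_a or E_a have weight weight h + 1 or weight h - 1. *)
Lemma actF_eq0 a u h :
  (forall y, u y != 0 -> inZplus y) -> (forall y, weight h - 1 <= weight y -> u y = 0) ->
  actF a u h = 0.
Proof.
case: h => h1 h2 su u0; rewrite /actF /=.
have u0' y : (inZplus y -> weight (h1, h2) - 1 <= weight y) -> u y = 0.
  by move=> wy; case: (u y =P 0) => // /eqP uy; apply/u0/wy/su.
rewrite (_ : (if _ then u _ else 0) = 0); last first.
  case: ifP => // /eqP/upopP[a1 _ e]; apply: u0' => Zy.
  by rewrite {1}e (weight_replV _ Zy a1); lia.
rewrite add0r; case: ifP => // /eqP/downopP[a2 _ e].
rewrite u0' ?mulr0 // => Zy.
by rewrite {1}e (weight_replW _ Zy a2); lia.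
Qed.

Lemma actE_eq0 a u h :
  (forall y, u y != 0 -> inZplus y) -> (forall y, weight h - 1 <= weight y -> u y = 0) ->
  actE a u h = 0.
Proof.
case: h => h1 h2 su u0; rewrite /actE /=.
have u0' y : (inZplus y -> weight (h1, h2) - 1 <= weight y) -> u y = 0.
  by move=> wy; case: (u y =P 0) => // /eqP uy; apply/u0/wy/su.
rewrite (_ : (if _ then u _ else 0) = 0); last first.
  case: ifP => // /eqP/upopP[a2 _ e]; apply: u0' => Zy.
  by rewrite {1}e (weight_replW _ Zy a2); lia.
rewrite add0r; case: ifP => // /eqP/downopP[a1 _ e].
rewrite u0' ?mulr0 // => Zy.
by rewrite {1}e (weight_replV _ Zy a1); lia.
Qed.

End FormalSums.

Section Straightening.
Variables m n : nat.
Variables (f1 : {ffun 'I_m -> int}) (f2 : {ffun 'I_n -> int}) (a : int).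
Hypotheses (a1 : ~~ memb a f1) (a2 : ~~ memb a f2).

Lemma actF_Kb_lowerV : memb (a + 1) f1 -> ~~ memb (a + 1) f2 ->
  actF a (Kb (lower a f1, f2)) = Kb (f1, f2).
Proof.
move=> a11 a12; apply: functional_extensionality => -[y1 y2].
rewrite actF_Kb /= (downop_None a12) upopE ?memb_lower ?memb_lower_succ //.
by rewrite replK // /Kb xpair_eqE (inj_eq (@Some_inj _)) mul0r addr0 (eq_sym f1).
Qed.

Lemma actE_Kb_lowerW : memb (a + 1) f2 -> ~~ memb (a + 1) f1 ->
  actE a (Kb (f1, lower a f2)) = Kb (f1, f2).
Proof.
move=> a12 a11; apply: functional_extensionality => -[y1 y2].
rewrite actE_Kb /= (downop_None a11) upopE ?memb_lower ?memb_lower_succ //.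
by rewrite replK // /Kb xpair_eqE (inj_eq (@Some_inj _)) mul0r addr0 (eq_sym f2) andbC.
Qed.

Lemma actF_Kb_lower_atypical : memb (a + 1) f1 -> memb (a + 1) f2 ->
  actF a (Kb (lower a f1, f2)) =
  (fun y => Kb (f1, f2) y + qq ^ (KV a (lower a f1)) * Kb (lower a f1, lower a f2) y).
Proof.
move=> a11 a12; apply: functional_extensionality => -[y1 y2].
rewrite actF_Kb /= upopE ?memb_lower ?memb_lower_succ // downopE // replK //.
rewrite /Kb !xpair_eqE !(inj_eq (@Some_inj _)) (eq_sym f1) (eq_sym (lower a f2)) andbC.
congr (_ + _).
by case: (y1 =P lower a f1) => [->|_]; rewrite ?eqxx ?andbF ?mul0r ?mulr0 // andbT mulrC.
Qed.

End Straightening.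

Definition atypicality m n (f : Zmn m n) := #|[pred p : 'I_m | memb (f.1 p) f.2]|.

Definition occupied m n (f : Zmn m n) x := memb x f.1 || memb x f.2.

Section Atypicality.
Variables m n : nat.
Variables (f1 : {ffun 'I_m -> int}) (f2 : {ffun 'I_n -> int}) (a : int).

Lemma atypicality_lowerV : ~~ memb (a + 1) f2 -> ~~ memb a f2 ->
  atypicality (lower a f1, f2) = atypicality (f1, f2).
Proof.
move=> a12 a2; apply: eq_card => p; rewrite !inE /= ffunE.
by case: eqP => [->|_]; rewrite ?(negbTE a12) ?(negbTE a2).
Qed.

Lemma atypicality_lowerW : ~~ memb (a + 1) f1 -> ~~ memb a f1 ->
  atypicality (f1, lower a f2) = atypicality (f1, f2).
Proof.
by move=> a11 a1; apply: eq_card => p; rewrite !inE /= memb_repl_other // memb_neq.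
Qed.

Lemma atypicality_lower : ~~ memb a f1 -> ~~ memb a f2 ->
  atypicality (lower a f1, lower a f2) = atypicality (f1, f2).
Proof.
move=> a1 a2; apply: eq_card => p; rewrite !inE /= ffunE.
case: (f1 p =P a + 1) => [->|ne]; first by rewrite memb_repl eqxx andbT (negbTE a2) orbF.
by rewrite memb_repl_other //; [apply: memb_neq | apply/eqP].
Qed.

Lemma atypicality_lowerV_lt : memb (a + 1) f1 -> memb (a + 1) f2 -> ~~ memb a f2 ->
  (atypicality (lower a f1, f2) < atypicality (f1, f2))%N.
Proof.
case/membP=> p0 e0 a12 a2; apply/proper_card/properP; split.
  by apply/subsetP=> p; rewrite !inE /= ffunE; case: eqP => [_|//]; rewrite (negbTE a2).
by exists p0; rewrite !inE /= ?ffunE e0 ?eqxx // (negbTE a2).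
Qed.

End Atypicality.

Lemma exists_min_atypical m n (f : Zmn m n) : ~~ typical f ->
  exists b, [/\ memb b f.1, memb b f.2 & forall x, memb x f.1 -> memb x f.2 -> b <= x].
Proof.
rewrite negb_forall => /existsP[p0]; rewrite negb_forall => /existsP[r0 /negPn/eqP e0].
have P0 : memb (f.1 p0) f.2 by apply/membP; exists r0.
have [p bp bmin] := @arg_minP _ _ _ p0 (fun p => memb (f.1 p) f.2) f.1 P0.
by exists (f.1 p); split=> // [|x /membP[q <-] /bmin //]; apply/membP; exists p.
Qed.

Lemma exists_first_free m n (f : Zmn m n) b : exists k : nat,
  ~~ occupied f (b - 1 - k%:Z) /\ forall j : nat, (j < k)%N -> occupied f (b - 1 - j%:Z).
Proof.
pose L := \sum_p `|f.1 p| + \sum_r `|f.2 r|.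
have le_sum k (s : {ffun 'I_k -> int}) p : `|s p| <= \sum_q `|s q|.
  by rewrite (bigD1 p) //= lerDl sumr_ge0.
have [L1 L2] : \sum_p `|f.1 p| <= L /\ \sum_r `|f.2 r| <= L.
  by rewrite lerDl lerDr !sumr_ge0.
have free : exists j : nat, ~~ occupied f (b - 1 - j%:Z).
  exists (`|b|%N + `|L|%N + 1)%N; rewrite /occupied negb_or.
  apply/andP; split; apply/membP => -[p e].
    by have := le_trans (le_sum _ _ p) L1; rewrite e; lia.
  by have := le_trans (le_sum _ _ p) L2; rewrite e; lia.
have [k kfree kmin] := ex_minnP free; exists k; split=> // j jk.
by apply: contraT => /kmin; rewrite leqNgt jk.
Qed.

Section BarInvolution.
Variables (m n : nat) (sig : {rmorphism Fq -> Fq}) (psi : fsum m n -> fsum m n).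
Hypothesis bar : is_bar sig psi.
Implicit Types (f x : Zmn m n) (u v : fsum m n).

Lemma bar_expand u x s : in_hatE u -> uniq s ->
  (forall f, sig (u f) * psi (Kb f) x != 0 -> f \in s) ->
  psi u x = \sum_(f <- s) sig (u f) * psi (Kb f) x.
Proof.
move=> hu us su; have [_ [cont _]] := bar.
by have [s' [us' su' ->]] := cont u hu x; apply: big_uniq_supp.
Qed.

Lemma bar_addZ u v c : in_hatE u -> in_hatE v ->
  psi (fun x => u x + c * v x) = (fun x => psi u x + sig c * psi v x).
Proof.
move=> hu hv; have hw := in_hatE_addZ c hu hv; have [_ [cont _]] := bar.
apply: functional_extensionality => x.
have [s1 [_ s1P _]] := cont _ hu x; have [s2 [_ s2P _]] := cont _ hv x.
have [s3 [_ s3P _]] := cont _ hw x.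
have us : uniq (undup (s1 ++ s2 ++ s3)) by apply: undup_uniq.
rewrite (bar_expand hw us) ?(bar_expand hu us) ?(bar_expand hv us); first last.
- by move=> f /s3P; rewrite mem_undup !mem_cat => ->; rewrite !orbT.
- by move=> f /s1P; rewrite mem_undup !mem_cat => ->.
- by move=> f /s2P; rewrite mem_undup !mem_cat => ->; rewrite orbT.
rewrite mulr_sumr -big_split /=; apply: eq_bigr => f _.
by rewrite rmorphD rmorphM /=; ring.
Qed.

Lemma bar0 : psi (fun _ => 0) = (fun _ => 0).
Proof.
apply: functional_extensionality => x.
rewrite (@bar_expand _ x [::]) ?big_nil // => [|f]; first exact: in_hatE0.
by rewrite rmorph0 mul0r eqxx.
Qed.

Lemma bar_Kb_inZpp f : inZpp f -> forall x, psi (Kb f) x != 0 -> inZpp x.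
Proof.
case/andP=> Zf /forallP bd x nz; have [hatE [_ [_ [_ [_ triang]]]]] := bar.
have [supp _] := hatE _ (in_hatE_Kb Zf); apply/andP; split; first exact: supp.
have [c [_ cP E]] := triang _ Zf; move: nz; rewrite E.
case: (x =P f) => [-> _|/eqP xf]; first by apply/forallP.
by rewrite Kb_neq // add0r => /cP xf_prec; apply/forallP; apply: bprec_boundW xf_prec bd.
Qed.

Lemma bar_hatEp u : in_hatEp u -> in_hatEp (psi u).
Proof.
move=> [hu Zu]; have [hatE [cont _]] := bar; split=> [|x]; first exact: hatE.
apply: contraTT => Zx; rewrite negbK; apply/eqP.
have [s [_ _ ->]] := cont u hu x; apply: big1 => f _.
case: (boolP (inZpp f)) => [Zf|nZf].
  case: (psi (Kb f) x =P 0) => [->|/eqP/(bar_Kb_inZpp Zf)]; first by rewrite mulr0.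
  by rewrite (negbTE Zx).
by rewrite (eq0_outside Zu nZf) rmorph0 mul0r.
Qed.

End BarInvolution.

Section Truncation.
Variables m n : nat.
Local Notation N := (n.+1)%:Z.
Implicit Types (u : fsum m n.+1) (f : Zmn m n.+1).

Lemma trunc_hatE u : in_hatE u -> in_hatE (trunc u).
Proof.
case=> su fu; split=> [[h1 h2] /su /inZplus_ext //|d].
have [s sP] := fu d; exists (map (fun f => (f.1, drop_last f.2)) s) => -[h1 h2] nz hd.
apply/mapP; exists (h1, ext h2 N); last by rewrite /= drop_last_ext.
apply: (sP _ nz) => r /=; case: (unliftP ord_max r) => [j ->|->].
  by rewrite ext_lift.
by rewrite ext_max; lia.
Qed.

Lemma trunc_Kb f :
  trunc (Kb f) = if f.2 ord_max == N then Kb (f.1, drop_last f.2) else (fun _ => 0).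
Proof.
apply: functional_extensionality => -[h1 h2]; case: f => f1 f2; rewrite /trunc /Kb /=.
case: (f2 ord_max =P N) => [fN|fN].
  by rewrite -[in LHS](ext_drop_last f2) fN !xpair_eqE eq_ext eqxx andbT.
case: ((h1, ext h2 N) =P (f1, f2)) => [[_ e2]|//].
by case: fN; rewrite -e2 ext_max.
Qed.

Lemma trunc_actF u a : (forall f, u f != 0 -> inZpp f) ->
  trunc (actF a u) = actF a (trunc u).
Proof.
move=> su; have u0 := eq0_outside su.
apply: functional_extensionality => -[h1 h2]; rewrite /trunc /actF /=.
congr (_ + _); rewrite repl_ext; set t := repl a (a + 1) h2.
case: (N =P a) => [Na|Na].
  rewrite (u0 (h1, ext t (a + 1))); last first.
    rewrite negb_and; apply/orP; right; rewrite negb_forall; apply/existsP; exists ord_max.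
    by rewrite /= ext_max -Na; lia.
  rewrite mulr0 if_same; case: ifP => // /eqP /downopP [ta _ _].
  by rewrite (u0 (h1, ext t N)) ?mulr0 // negb_and (ext_notinZplus h1 ta) //; lia.
case: (N =P a + 1) => [Na1|Na1].
  have -> : (downop a (ext t N) == Some (ext h2 N)) = false.
    case D: (downop a (ext t N)) => [x|] //; case/downopP: D => _ _ ->.
    rewrite repl_ext -Na1 eqxx /=; apply/negP => /eqP [] /ext_inj [_ E]; by case: Na.
  case: ifP => // /eqP /downopP [ta _ _].
  by rewrite (u0 (h1, ext t N)) ?mulr0 // negb_and (ext_notinZplus h1 ta) // Na1.
rewrite /downop !memb_ext repl_ext.
have [-> ->] : (a + 1 == N) = false /\ (a == N) = false by split; apply/eqP => /esym.
have -> : (N == a + 1) = false by apply/eqP.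
rewrite !orbF; case: (memb (a + 1) t && ~~ memb a t) => //=.
by rewrite !(inj_eq (@Some_inj _)) eq_ext eqxx andbT.
Qed.

Lemma trunc_actE u a : a + 1 != N -> a != N -> trunc (actE a u) = actE a (trunc u).
Proof.
move=> Na1 Na; apply: functional_extensionality => -[h1 h2]; rewrite /trunc /actE /=.
have -> : KW a (ext h2 N) = KW a h2 by rewrite /KW !memb_ext (negbTE Na1) (negbTE Na) !orbF.
congr (_ + _); rewrite repl_ext.
have -> : (N == a + 1) = false by rewrite eq_sym (negbTE Na1).
rewrite /upop !memb_ext repl_ext (negbTE Na1) (negbTE Na) !orbF.
have -> : (N == a) = false by rewrite eq_sym (negbTE Na).
case: (memb a (lower a h2) && ~~ memb (a + 1) (lower a h2)) => //=.
by rewrite !(inj_eq (@Some_inj _)) eq_ext eqxx andbT.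
Qed.

End Truncation.

Definition gap m n (f : Zmn m n.+1) (h : Zmn m n) : int :=
  weight f - (weight h + n.+1%:Z).

Section Defect.
Variables (m n : nat) (sig : {rmorphism Fq -> Fq})
  (psi1 : fsum m n.+1 -> fsum m n.+1) (psi0 : fsum m n -> fsum m n).
Hypotheses (psi1_bar : is_bar sig psi1) (psi0_bar : is_bar sig psi0).
Local Notation N := (n.+1)%:Z.
Implicit Types (f g : Zmn m n.+1) (h : Zmn m n) (D : int).

Definition defect f : fsum m n := fun h => trunc (psi1 (Kb f)) h - psi0 (trunc (Kb f)) h.

Lemma defect_supp f y : inZplus f -> defect f y != 0 -> inZplus y.
Proof.
move=> Zf; have [hatE1 _] := psi1_bar; have [hatE0 _] := psi0_bar.
rewrite /defect; case: (trunc (psi1 (Kb f)) y =P 0) => [->|/eqP nz _].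
  have [supp _] := hatE0 _ (trunc_hatE (in_hatE_Kb Zf)).
  by rewrite sub0r oppr_eq0; apply: supp.
have [supp _] := hatE1 _ (in_hatE_Kb Zf); move: nz; rewrite /trunc => /supp.
by case: y => y1 y2 /inZplus_ext.
Qed.

Lemma defect_gap f h : inZplus f -> defect f h != 0 -> 0 <= gap f h.
Proof.
move=> Zf; have [_ [_ [_ [_ [_ triang1]]]]] := psi1_bar.
have [_ [_ [_ [_ [_ triang0]]]]] := psi0_bar.
have [c1 [_ c1P E1]] := triang1 _ Zf.
have gap_c1 : c1 (h.1, ext h.2 N) != 0 -> 0 <= gap f h.
  by case: h => h1 h2 /c1P /weight_bprec; rewrite weight_ext /gap subr_ge0.
rewrite /defect trunc_Kb /trunc E1; case: f Zf c1P E1 gap_c1 => f1 f2 Zf c1P E1 gap_c1 /=.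
case: (f2 ord_max =P N) => [fN|fN]; last first.
  rewrite (bar0 psi0_bar) Kb_neq ?add0r ?subr0 //.
  by apply/eqP => -[_ e2]; apply: fN; rewrite -e2 ext_max.
move: Zf c1P E1 gap_c1; rewrite -(ext_drop_last f2) fN drop_last_ext.
move: (drop_last f2) => g2 Zf c1P E1 gap_c1.
have [c0 [_ c0P E0]] := triang0 _ (inZplus_ext Zf).
rewrite E0 /Kb xpair_eqE eq_ext eqxx andbT -xpair_eqE.
case: (c1 (h.1, ext h.2 N) =P 0) => [c1h|/eqP/gap_c1 ge0 _]; last exact: ge0.
rewrite c1h addr0 opprD addrA subrr add0r oppr_eq0 => /c0P /weight_bprec.
by rewrite /gap !weight_ext; lia.
Qed.

Lemma defect_typical f h : inZplus f -> typical f -> defect f h = 0.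
Proof.
move=> Zf tf; have [_ [_ [fix1 _]]] := psi1_bar; have [_ [_ [fix0 _]]] := psi0_bar.
rewrite /defect fix1 // trunc_Kb.
case: (f.2 ord_max =P N) => [fN|_]; last by rewrite (bar0 psi0_bar) subrr.
rewrite fix0 ?subrr //.
  case: f Zf {tf} fN => f1 f2 /= Zf fN.
  by apply: (@inZplus_ext _ _ _ _ N); rewrite -fN ext_drop_last.
apply/forallP=> p; apply/forallP=> r; rewrite ffunE.
by move/forallP: tf => /(_ p) /forallP /(_ (lift ord_max r)).
Qed.

Lemma defect_actF f g a h : inZpp g -> actF a (Kb g) = Kb f ->
  defect f h = actF a (defect g) h.
Proof.
move=> Zg gf; have Zg' := inZpp_plus Zg.
have [_ [_ [_ [act1 _]]]] := psi1_bar; have [_ [_ [_ [act0 _]]]] := psi0_bar.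
rewrite /defect -gf; have [_ -> _] := act1 _ (in_hatE_Kb Zg') a.
have Kb_g x : Kb g x != 0 -> inZpp x by move/Kb_supp ->.
rewrite (trunc_actF _ (bar_Kb_inZpp psi1_bar Zg)) (trunc_actF _ Kb_g).
by have [_ -> _] := act0 _ (trunc_hatE (in_hatE_Kb Zg')) a; rewrite actF_sub.
Qed.

Lemma defect_actE f g a h : a + 1 != N -> a != N -> inZplus g -> actE a (Kb g) = Kb f ->
  defect f h = actE a (defect g) h.
Proof.
move=> Na1 Na Zg gf.
have [_ [_ [_ [act1 _]]]] := psi1_bar; have [_ [_ [_ [act0 _]]]] := psi0_bar.
rewrite /defect -gf; have [-> _ _] := act1 _ (in_hatE_Kb Zg) a.
rewrite !(trunc_actE _ Na1 Na).
by have [-> _ _] := act0 _ (trunc_hatE (in_hatE_Kb Zg)) a; rewrite actE_sub.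
Qed.

Lemma defect_actF_sub f g g' a c h : inZpp g -> inZplus f -> inZplus g' ->
  actF a (Kb g) = (fun x => Kb f x + c * Kb g' x) ->
  defect f h = actF a (defect g) h - sig c * defect g' h.
Proof.
move=> Zg Zf Zg' gf; have Zgp := inZpp_plus Zg.
have [_ [_ [_ [act1 _]]]] := psi1_bar; have [_ [_ [_ [act0 _]]]] := psi0_bar.
have Kb_g x : Kb g x != 0 -> inZpp x by move/Kb_supp ->.
have bar1_f : psi1 (Kb f) = fun x => actF a (psi1 (Kb g)) x - sig c * psi1 (Kb g') x.
  have [_ <- _] := act1 _ (in_hatE_Kb Zgp) a.
  rewrite gf (bar_addZ psi1_bar _ (in_hatE_Kb Zf) (in_hatE_Kb Zg')).
  by apply: functional_extensionality => x; rewrite addrK.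
have trunc_gf : (fun x => trunc (Kb f) x + c * trunc (Kb g') x) = actF a (trunc (Kb g)).
  by rewrite -(trunc_actF _ Kb_g) gf.
have bar0_f : psi0 (trunc (Kb f)) =
    fun x => actF a (psi0 (trunc (Kb g))) x - sig c * psi0 (trunc (Kb g')) x.
  have [_ <- _] := act0 _ (trunc_hatE (in_hatE_Kb Zgp)) a.
  rewrite -trunc_gf.
  rewrite (bar_addZ psi0_bar _ (trunc_hatE (in_hatE_Kb Zf)) (trunc_hatE (in_hatE_Kb Zg'))).
  by apply: functional_extensionality => x; rewrite addrK.
have trunc_bar1_f : trunc (psi1 (Kb f)) h =
    trunc (actF a (psi1 (Kb g))) h - sig c * trunc (psi1 (Kb g')) h.
  by rewrite /trunc bar1_f.
rewrite (trunc_actF _ (bar_Kb_inZpp psi1_bar Zg)) in trunc_bar1_f.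
by rewrite /defect bar0_f trunc_bar1_f actF_sub; ring.
Qed.

Lemma defect_eq0_atypical_pair D (f1 : {ffun 'I_m -> int}) (f2 : {ffun 'I_n.+1 -> int}) a :
  inZpp (f1, f2) -> memb (a + 1) f1 -> memb (a + 1) f2 -> ~~ memb a f1 -> ~~ memb a f2 ->
  (forall h, defect (lower a f1, f2) h = 0) ->
  (forall h, gap (lower a f1, lower a f2) h < D -> defect (lower a f1, lower a f2) h = 0) ->
  forall h, gap (f1, f2) h <= D -> defect (f1, f2) h = 0.
Proof.
move=> Zf a11 a12 a1 a2 defect_g defect_g' h gap_h.
have Zg := inZpp_lowerV Zf a1; have Zg' := inZpp_lowerV (inZpp_lowerW Zf a2) a1.
have := actF_Kb_lower_atypical a1 a2 a11 a12.
move/(defect_actF_sub h Zg (inZpp_plus Zf) (inZpp_plus Zg')) ->.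
rewrite actF_eq0 => [|y|y _]; rewrite ?defect_g ?eqxx //.
rewrite defect_g' ?mulr0 ?subrr //; move: gap_h.
have Zfw := inZpp_plus (inZpp_lowerW Zf a2).
rewrite /gap (weight_replV _ Zfw a11) (weight_replW _ (inZpp_plus Zf) a12); lia.
Qed.

Lemma defect_eq0_lowerV D (f1 : {ffun 'I_m -> int}) (f2 : {ffun 'I_n.+1 -> int}) a :
  inZpp (f1, f2) -> memb (a + 1) f1 -> ~~ memb (a + 1) f2 -> ~~ memb a f1 ->
  (forall h, gap (lower a f1, f2) h <= D -> defect (lower a f1, f2) h = 0) ->
  forall h, gap (f1, f2) h <= D -> defect (f1, f2) h = 0.
Proof.
move=> Zf a11 a12 a1 defect_g h gap_h; have Zg := inZpp_lowerV Zf a1.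
rewrite (defect_actF h Zg (actF_Kb_lowerV a1 a11 a12)).
apply: actF_eq0 => [y|y hy]; first exact/defect_supp/inZpp_plus.
apply: defect_g; move: gap_h; rewrite /gap (weight_replV _ (inZpp_plus Zf) a11); lia.
Qed.

Lemma defect_eq0_lowerW D (f1 : {ffun 'I_m -> int}) (f2 : {ffun 'I_n.+1 -> int}) a :
  a + 1 < N -> inZpp (f1, f2) -> memb (a + 1) f2 -> ~~ memb (a + 1) f1 -> ~~ memb a f2 ->
  (forall h, gap (f1, lower a f2) h <= D -> defect (f1, lower a f2) h = 0) ->
  forall h, gap (f1, f2) h <= D -> defect (f1, f2) h = 0.
Proof.
move=> aN Zf a12 a11 a2 defect_g h gap_h; have Zg := inZpp_plus (inZpp_lowerW Zf a2).
have [Na1 Na] : a + 1 != N /\ a != N by split; apply/eqP; lia.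
rewrite (defect_actE h Na1 Na Zg (actE_Kb_lowerW a2 a12 a11)).
apply: actE_eq0 => [y|y hy]; first exact: defect_supp.
apply: defect_g; move: gap_h; rewrite /gap (weight_replW _ (inZpp_plus Zf) a12); lia.
Qed.

(* b is the smallest atypical value of f and b - 1 - k the largest free value
   below it; each step of the induction on k moves that free value up by one. *)
Lemma defect_eq0_below (c : nat) D :
  (forall g, inZpp g -> (atypicality g < c)%N -> forall h, defect g h = 0) ->
  (forall g, inZpp g -> atypicality g = c -> forall h, gap g h < D -> defect g h = 0) ->
  forall (k : nat) f b, inZpp f -> atypicality f = c ->
  memb b f.1 -> memb b f.2 -> (forall x, memb x f.1 -> memb x f.2 -> b <= x) ->
  ~~ occupied f (b - 1 - k%:Z) -> (forall j : nat, (j < k)%N -> occupied f (b - 1 - j%:Z)) ->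
  forall h, gap f h <= D -> defect f h = 0.
Proof.
move=> IHc IHD; elim=> [|k IHk] [f1 f2] b Zf cf /= b1 b2 bmin free occ.
  set a := b - 1; have ba : b = a + 1 by rewrite subrK.
  move: free; rewrite /occupied subr0 negb_or => /andP[a1 a2]; rewrite ba in b1 b2.
  apply: (defect_eq0_atypical_pair (a := a)) => // [h|h].
    by apply: IHc (inZpp_lowerV Zf a1) _ h; rewrite -cf atypicality_lowerV_lt.
  by apply: IHD (inZpp_lowerV (inZpp_lowerW Zf a2) a1) _ h; rewrite atypicality_lower.
set a := b - 1 - k.+1%:Z; have ab : a + 1 < b by rewrite /a; lia.
have [ba ba1] : b != a /\ b != a + 1 by split; apply/eqP; lia.
have occ_lower g :
    (forall y, y != a -> y != a + 1 -> occupied g y = occupied (f1, f2) y) ->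
    forall j : nat, (j < k)%N -> occupied g (b - 1 - j%:Z).
  by move=> E j jk; rewrite E ?occ 1?ltnW //; apply/eqP; rewrite /a; lia.
have a1_val : b - 1 - k%:Z = a + 1 by rewrite /a; lia.
move: free (occ k (ltnSn k)); rewrite /occupied /= a1_val negb_or => /andP[a1 a2].
case/orP=> [a11|a12].
  have a12 : ~~ memb (a + 1) f2 by apply/negP => /(bmin _ a11); lia.
  apply: (defect_eq0_lowerV Zf a11 a12 a1) => h; apply: (IHk _ b) => //=.
  - exact: inZpp_lowerV.
  - by rewrite atypicality_lowerV.
  - by rewrite memb_repl_other.
  - move=> x; rewrite memb_repl => /orP[/andP[_ /eqP->]|/andP[x1 _]]; last exact: bmin.
    by rewrite (negbTE a2).
  - by rewrite /occupied /= a1_val memb_lower_succ (negbTE a12).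
  - by apply: occ_lower => y ya ya1; rewrite /occupied /= memb_repl_other.
have a11 : ~~ memb (a + 1) f1 by apply/negP => /bmin /(_ a12); lia.
have aN : a + 1 < N by have := inZpp_memb_le Zf b2; lia.
apply: (defect_eq0_lowerW aN Zf a12 a11 a2) => h; apply: (IHk _ b) => //=.
- exact: inZpp_lowerW.
- by rewrite atypicality_lowerW.
- by rewrite memb_repl_other.
- move=> x x1; rewrite memb_repl => /orP[/andP[_ /eqP xa]|/andP[x2 _]]; last exact: bmin.
  by move: x1; rewrite xa (negbTE a1).
- by rewrite /occupied /= a1_val memb_lower_succ (negbTE a11).
- by apply: occ_lower => y ya ya1; rewrite /occupied /= memb_repl_other.
Qed.

Lemma defect_eq0 f : inZpp f -> forall h, defect f h = 0.
Proof.
move: {2}(atypicality f) (erefl (atypicality f)) => c.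
elim/ltn_ind: c f => c IHc f cf Zf h.
suff IHD (d : nat) g :
    inZpp g -> atypicality g = c -> forall h, gap g h < d%:Z -> defect g h = 0.
  by apply: (IHD `|gap f h|.+1) => //; lia.
elim: d g => [|d IHD] g Zg cg {}h gap_h.
  by apply/eqP; apply: contraTT gap_h => /(defect_gap (inZpp_plus Zg)); rewrite -leNgt.
case: (boolP (typical g)) => [tg|/exists_min_atypical[b [b1 b2 bmin]]].
  exact: defect_typical (inZpp_plus Zg) tg.
have [k [free occ]] := exists_first_free g b.
apply: (defect_eq0_below _ IHD Zg cg b1 b2 bmin free occ); last by lia.
by move=> g' Zg' lt_c; apply: IHc lt_c g' erefl Zg'.
Qed.

Lemma trunc_bar_Kb f : inZpp f -> trunc (psi1 (Kb f)) = psi0 (trunc (Kb f)).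
Proof.
move=> Zf; apply: functional_extensionality => h.
by apply/eqP; rewrite -subr_eq0; apply/eqP/defect_eq0.
Qed.

Lemma trunc_bar_term (u : fsum m n.+1) f h : (forall f, u f != 0 -> inZpp f) ->
  sig (u f) * psi1 (Kb f) (h.1, ext h.2 N) = sig (u f) * psi0 (trunc (Kb f)) h.
Proof.
move=> Zu; case: (boolP (inZpp f)) => [Zf|nZf]; first by rewrite -(trunc_bar_Kb Zf).
by rewrite (eq0_outside Zu nZf) rmorph0 !mul0r.
Qed.

Lemma trunc_bar (u : fsum m n.+1) : in_hatEp u -> trunc (psi1 u) = psi0 (trunc u).
Proof.
move=> [hu Zu]; have [_ [cont _]] := psi1_bar; apply: functional_extensionality => h.
rewrite [LHS]/trunc; have [s [us sP ->]] := cont u hu (h.1, ext h.2 N).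
under eq_bigr do rewrite trunc_bar_term //.
pose s0 := [seq (f.1, drop_last f.2) | f <- s & f.2 ord_max == N].
have us0 : uniq s0.
  rewrite map_inj_in_uniq ?filter_uniq // => -[f1 f2] [g1 g2].
  rewrite !mem_filter /= => /andP[/eqP fN _] /andP[/eqP gN _] [-> e2].
  by rewrite -(ext_drop_last f2) -(ext_drop_last g2) fN gN e2.
rewrite (bar_expand psi0_bar (trunc_hatE hu) us0).
  rewrite big_map big_filter [RHS]big_mkcond; apply: eq_bigr => f _.
  rewrite trunc_Kb; case: eqP => [fN|_]; last by rewrite (bar0 psi0_bar) mulr0.
  by case: f fN => f1 f2 fN; rewrite /trunc /= -fN ext_drop_last.
move=> [f1 f2] nz; apply/mapP; exists (f1, ext f2 N); last by rewrite /= drop_last_ext.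
rewrite mem_filter ext_max eqxx andTb; apply: sP.
by rewrite (trunc_bar_term _ _ Zu) trunc_Kb ext_max eqxx drop_last_ext.
Qed.

End Defect.

Unset Implicit Arguments.

Theorem proposition2p8 (m n : nat) (sig : {rmorphism Fq -> Fq})
    (psi1 : fsum m n.+1 -> fsum m n.+1) (psi0 : fsum m n -> fsum m n) :
  sig qq = qq^-1 ->
  is_bar sig psi1 -> is_bar sig psi0 ->
  forall u : fsum m n.+1, in_hatEp u ->
    in_hatEp (psi1 u) /\ trunc (psi1 u) = psi0 (trunc u).
Proof.
move=> _ psi1_bar psi0_bar u hu.
by split; [exact: bar_hatEp psi1_bar u hu | exact: trunc_bar psi1_bar psi0_bar u hu].
Qed.
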